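(* Let $\sigma\in\mathfrak{S}_n$ and $P=\Psi_n(\sigma)$. Let $1\leq i<j\leq n$. Then the letter $i$ is immediately followed by the letter $j$ in the word $\sigma(1)\sigma(2)\cdots\sigma(n)$ if and only if the three following conditions hold: (a) $i<_h j$ in $P$; (b) for all $x\in P$, if $x<_h j$ in $P$ then $x\leq_h i$ or $x\geq_r i$; (c) for all $x\in P$, if $x>_h i$ in $P$ then $x\geq_h j$ or $x\leq_r j$.
   Context: For $\sigma\in\mathfrak{S}_n$, $\Psi_n(\sigma)=P_\sigma$ is the double poset on $\{1,\ldots,n\}$ with $i\leq_h j$ iff ($i\leq j$ and $\sigma^{-1}(i)\leq\sigma^{-1}(j)$), and $i\leq_r j$ iff ($i\leq j$ and $\sigma^{-1}(i)\geq\sigma^{-1}(j)$). (It is a plane poset: two distinct elements are $\leq_h$-comparable iff they are not $\leq_r$-comparable.) Strict versions $<_h,<_r$ denote the orders with equality excluded. *)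

From mathcomp Require Import all_boot all_order all_fingroup.
Set Implicit Arguments. Unset Strict Implicit. Unset Printing Implicit Defensive.

(* Letters {1..n} are encoded as 'I_n = {0..n-1} (shift by one); positions too.
   The word of sigma is sigma(0) sigma(1) ... sigma(n-1). *)

Definition leh n (s : 'S_n) (i j : 'I_n) : bool :=
  (i <= j)%N && (s^-1%g i <= s^-1%g j)%N.
Definition ler n (s : 'S_n) (i j : 'I_n) : bool :=
  (i <= j)%N && (s^-1%g j <= s^-1%g i)%N.
Definition lth n (s : 'S_n) (i j : 'I_n) : bool := (i != j) && leh s i j.
Definition ltr n (s : 'S_n) (i j : 'I_n) : bool := (i != j) && ler s i j.

Definition imm_followed n (s : 'S_n) (i j : 'I_n) : Prop :=
  exists k : 'I_n, exists k' : 'I_n, nat_of_ord k' = (nat_of_ord k).+1 /\ s k = i /\ s k' = j.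

(* Write [p] for the position map [s^-1].  Since [i < j] already orders the
   letters, each of (a), (b), (c) only constrains positions, and together they
   say exactly that [p i < p j] with no letter at a position strictly between:
   a letter [x] there is [<_h j] (if [x < j]) or [>_h i] (if [x > j]), and in
   either case neither alternative of (b) or (c) can hold. *)
From mathcomp Require Import all_boot all_order all_fingroup.
From mathcomp Require Import zify.

Set Implicit Arguments.
Unset Strict Implicit.
Unset Printing Implicit Defensive.

Section PlanePoset.

Variables (n : nat) (s : 'S_n).

Local Notation pos x := (nat_of_ord (s^-1%g x)).

Lemma eq_pos (x y : 'I_n) : (pos x == pos y) = (x == y).
Proof. by rewrite val_eqE (inj_eq perm_inj). Qed.

Lemma imm_followedE (i j : 'I_n) : imm_followed s i j <-> pos j = (pos i).+1.
Proof.
split=> [[k [k' [kk' [<- <-]]]] | pij]; first by rewrite !permK.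
by exists (s^-1%g i), (s^-1%g j); rewrite !permKV.
Qed.

Lemma lth_pos (x y : 'I_n) :
  lth s x y = [&& x != y, (x <= y)%N & (pos x <= pos y)%N].
Proof. by []. Qed.

Lemma lth_pos_lt (x y : 'I_n) : lth s x y -> (pos x < pos y)%N.
Proof.
rewrite lth_pos -eq_pos => /and3P [nxy _ le_xy].
by rewrite ltn_neqAle nxy.
Qed.

Lemma exists_pos_between (i j : 'I_n) :
  ((pos i).+1 < pos j)%N -> exists x : 'I_n, (pos i < pos x < pos j)%N.
Proof.
move=> lt_ij; have lt_n : ((pos i).+1 < n)%N by have := ltn_ord (s^-1%g j); lia.
by exists (s (Ordinal lt_n)); rewrite permK /=; lia.
Qed.

Section Adjacent.

Variables (i j : 'I_n).
Hypotheses (lt_ij : (i < j)%N) (pos_ij : pos j = (pos i).+1).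

Lemma adjacent_lth : lth s i j.
Proof. by rewrite lth_pos -val_eqE /=; lia. Qed.

Lemma adjacent_below (x : 'I_n) : lth s x j -> leh s x i \/ ler s i x.
Proof.
rewrite lth_pos -eq_pos => /and3P [/eqP nxj _ le_xj].
have le_xi : (pos x <= pos i)%N by lia.
by case: (leqP x i) => cmp; [left | right]; rewrite /leh /ler; lia.
Qed.

Lemma adjacent_above (x : 'I_n) : lth s i x -> leh s j x \/ ler s x j.
Proof.
rewrite lth_pos -eq_pos => /and3P [/eqP nix _ le_ix].
have le_jx : (pos j <= pos x)%N by lia.
by case: (leqP j x) => cmp; [left | right]; rewrite /leh /ler; lia.
Qed.

End Adjacent.

Lemma no_pos_between (i j x : 'I_n) : (i < j)%N ->
  (forall y : 'I_n, lth s y j -> leh s y i \/ ler s i y) ->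
  (forall y : 'I_n, lth s i y -> leh s j y \/ ler s y j) ->
  ~ (pos i < pos x < pos j)%N.
Proof.
move=> lt_ij below above /andP [lt_ix lt_xj].
have nxj : x != j by rewrite -eq_pos; lia.
case: (ltnP x j) => cmp.
- have : lth s x j by rewrite lth_pos nxj; lia.
  by case/below; rewrite /leh /ler; lia.
- have : lth s i x by rewrite lth_pos -val_eqE /=; lia.
  by case/above; rewrite /leh /ler; lia.
Qed.

End PlanePoset.

Theorem lemma11 (n : nat) (s : 'S_n) (i j : 'I_n) :
  (i < j)%N ->
  (imm_followed s i j <->
   [/\ lth s i j,
       (forall x : 'I_n, lth s x j -> leh s x i \/ ler s i x) &
       (forall x : 'I_n, lth s i x -> leh s j x \/ ler s x j)]).
Proof.
move=> lt_ij; rewrite imm_followedE; split=> [pos_ij | [lth_ij below above]].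
  split; [exact: adjacent_lth | exact: adjacent_below | exact: adjacent_above].
have lt_pos := lth_pos_lt lth_ij.
case: (ltngtP (s^-1%g j) (s^-1%g i).+1) => // gap; first lia.
have [x between] := exists_pos_between gap.
by have := no_pos_between lt_ij below above between.
Qed.
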